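(* For every integer $n\geq 1$, \[ \sum_{k,\ell,d\geq 0}\binom{n-1-d}{\ell}\binom{n-1-k}{d}\binom{n-1-\ell}{k} = \tfrac{1}{2}F_{3n}. \]
   Context: $F_n$ is the Fibonacci sequence: $F_0=0$, $F_1=1$, $F_n=F_{n-1}+F_{n-2}$ for $n\ge2$. Binomial coefficients $\binom{a}{b}$ with $b\ge0$ are taken to be $0$ when $a<b$ (in particular when $a<0$), so the sum is finite. *)

From mathcomp Require Import all_boot all_order all_algebra.
Set Implicit Arguments. Unset Strict Implicit. Unset Printing Implicit Defensive.

Fixpoint fib (n : nat) : nat :=
  match n with
  | 0 => 0
  | 1 => 1
  | (m.+1 as p).+1 => fib p + fib m
  end.

Definition binz (a : int) (b : nat) : nat :=
  match a with
  | Posz m => 'C(m, b)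
  | Negz _ => 0
  end.

From mathcomp Require Import all_boot all_order all_algebra.
From mathcomp Require Import zify.
Import GRing.Theory.

(* Work with polynomials in Y = 1 + X, so that 'C(j, k) is the coefficient of
   X^k in Y^j.  Two applications of the binomial theorem then collapse the sums
   over l and d: for n = m + 1 the triple sum is
     S m = \sum_(k <= m) [X^k] (Y + 1)^k (2Y + 1)^(m - k),
   with Y + 1 = 2 + X and 2Y + 1 = 3 + 2X.  Multiplying by these two linear
   factors shows that the diagonal coefficients c(k, r) = [X^k] (2 + X)^k (3 + 2X)^r
   satisfy c(k+1, r+1) = c(k, r+1) + 3 c(k+1, r) + c(k, r), with c(k, 0) = 1 and
   c(0, r) = 3^r; hence S (m + 2) = 4 S (m + 1) + S m, which is also the recurrence
   of F_(3m+3), and the initial values 2 S 0 = F_3, 2 S 1 = F_6 agree. *)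

Section AntidiagonalSum.

Variables (c : nat -> nat -> nat) (b g : nat).
Hypothesis c_SS : forall k r, c k.+1 r.+1 = c k r.+1 + b * c k.+1 r + g * c k r.
Hypothesis c_S0 : forall k, c k.+1 0 = c k 0.
Hypothesis c_0S : forall r, c 0 r.+1 = b * c 0 r.

Definition antidiag_sum m := \sum_(k < m.+1) c k (m - k).

Lemma antidiag_sumSS m :
  antidiag_sum m.+2 = b.+1 * antidiag_sum m.+1 + g * antidiag_sum m.
Proof.
have first_col : antidiag_sum m.+1 = c 0 m.+1 + \sum_(i < m.+1) c i.+1 (m - i).
  by rewrite /antidiag_sum big_ord_recl.
have last_row : antidiag_sum m.+1 = \sum_(i < m.+1) c i (m.+1 - i) + c m.+1 0.
  by rewrite /antidiag_sum big_ord_recr /= subnn.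
have inner : \sum_(i < m.+1) c i.+1 (m.+2 - i.+1) =
    \sum_(i < m.+1) c i (m.+1 - i) + b * \sum_(i < m.+1) c i.+1 (m - i)
      + g * antidiag_sum m.
  rewrite /antidiag_sum !big_distrr -!big_split /=; apply: eq_bigr => i _.
  by rewrite !subSS subSn ?c_SS // -ltnS.
rewrite {1}/antidiag_sum big_ord_recl big_ord_recr /= subnn inner c_0S c_S0.
by rewrite mulSn {1}last_row first_col mulnDr; lia.
Qed.

End AntidiagonalSum.

Lemma rec2_uniq (a b : nat) (u v : nat -> nat) :
    u 0 = v 0 -> u 1 = v 1 ->
    (forall n, u n.+2 = a * u n.+1 + b * u n) ->
    (forall n, v n.+2 = a * v n.+1 + b * v n) ->
  u =1 v.
Proof.
move=> u0 u1 uSS vSS n; suff [] : u n = v n /\ u n.+1 = v n.+1 by [].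
by elim: n => [|n [IHn IHn1]]; last rewrite uSS vSS IHn IHn1.
Qed.

Lemma fib_mul3SS n : fib (3 * n.+3) = 4 * fib (3 * n.+2) + fib (3 * n.+1).
Proof. by rewrite !mulnS; move: (3 * n) => t; rewrite !addSn add0n /=; lia. Qed.

Local Open Scope ring_scope.

Lemma coef_linear_exp (R : comNzSemiRingType) (a b : R) n j :
  ((b%:P * 'X + a%:P) ^+ n)`_j = a ^+ (n - j) * b ^+ j *+ 'C(n, j).
Proof.
rewrite addrC exprDn coef_sum.
under eq_bigr => i _.
  rewrite exprMn -!rmorphXn mulrA -rmorphM coefMn coefCM coefXn mulr_natr mulrb.
  rewrite (fun_if (fun x => x *+ 'C(n, i))) mul0rn eq_sym.
  over.
rewrite -big_mkcond (big_ord1_eq _ (fun i => a ^+ (n - i) * b ^+ i *+ 'C(n, i))) ltnS.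
by case: leqP => // nj; rewrite bin_small.
Qed.

Lemma coef_linearM (R : nzSemiRingType) (a b : R) (q : {poly R}) i :
  ((b%:P * 'X + a%:P) * q)`_i.+1 = b * q`_i + a * q`_i.+1.
Proof. by rewrite mulrDl -mulrA coefD !coefCM coefXM. Qed.

Lemma mul_exprDn_sub (R : comNzSemiRingType) (x y : R) k m : (k <= m)%N ->
  x ^+ k * (x + y) ^+ (m - k) = \sum_(i < m.+1) x ^+ (m - i) * y ^+ i *+ 'C(m - k, i).
Proof.
move=> km; rewrite exprDn mulr_sumr.
rewrite (big_ord_widen m.+1
  (fun i => x ^+ k * (x ^+ (m - k - i) * y ^+ i *+ 'C(m - k, i)))) ?ltnS ?leq_subr //.
rewrite big_mkcond; apply: eq_bigr => i _.
case: ltnP => [ikm | ?]; last by rewrite bin_small.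
by rewrite mulrnAr mulrA -exprD; congr (x ^+ _ * _ *+ _); lia.
Qed.

Definition diag_coef (k r : nat) :=
  (('X + 2%:P) ^+ k * (2%:P * 'X + 3%:P) ^+ r : {poly nat})`_k.

Lemma coef_XaddC1_exp (j i : nat) : (('X + 1 : {poly nat}) ^+ j)`_i = 'C(j, i).
Proof. by rewrite -[X in X + _]mul1r -polyC1 coef_linear_exp !expr1n mulr1 natn. Qed.

Lemma triple_sum_diag_coef m k : (k <= m)%N ->
  (\sum_(l < m.+1) \sum_(d < m.+1) 'C(m - d, l) * 'C(m - k, d) * 'C(m - l, k))%N
  = diag_coef k (m - k).
Proof.
move=> km; set Y : {poly nat} := 'X + 1.
have YS : Y + 1 = 'X + 2%:P by rewrite -addrA -polyC1 -polyCD.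
have YSY : Y + 1 + Y = 2%:P * 'X + 3%:P.
  by apply/polyP => i; rewrite !coefE; case: i => [|[|i]].
rewrite /diag_coef -YS -YSY mul_exprDn_sub // coef_sum exchange_big /=.
apply: eq_bigr => d _.
have dm : (d <= m)%N := ltnSE (ltn_ord d).
rewrite coefMn mulrC mul_exprDn_sub // coef_sum -mulr_natr natn big_distrl /=.
apply: eq_bigr => l _.
rewrite coefMn expr1n mulr1 coef_XaddC1_exp -mulr_natr natn.
by rewrite mulnC mulnA.
Qed.

Lemma diag_coefSS k r :
  (diag_coef k.+1 r.+1 = diag_coef k r.+1 + 3 * diag_coef k.+1 r + diag_coef k r)%N.
Proof.
rewrite /diag_coef -[X in X + 2%:P]mul1r -polyC1.
set u := _ * 'X + 2%:P; set v := _ * 'X + 3%:P.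
have -> : u ^+ k.+1 * v ^+ r.+1 = u * (v * (u ^+ k * v ^+ r)).
  by rewrite !exprS -mulrA [u ^+ k * _]mulrCA.
have -> : u ^+ k * v ^+ r.+1 = v * (u ^+ k * v ^+ r) by rewrite exprS mulrCA.
have -> : u ^+ k.+1 * v ^+ r = u * (u ^+ k * v ^+ r) by rewrite exprS -mulrA.
by rewrite !coef_linearM; lia.
Qed.

Lemma diag_coef_k0 k : diag_coef k 0 = 1%N.
Proof.
rewrite /diag_coef mulr1 -[X in X + 2%:P]mul1r -polyC1 coef_linear_exp.
by rewrite subnn binn expr1n mulr1.
Qed.

Lemma diag_coef_0r r : diag_coef 0 r = (3 ^ r)%N.
Proof.
by rewrite /diag_coef mul1r coef_linear_exp subn0 bin0 mulr1 mulr1n natrXE.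
Qed.

Lemma antidiag_diag_coef_fib m : (2 * antidiag_sum diag_coef m)%N = fib (3 * m.+1).
Proof.
have S_SS n : antidiag_sum diag_coef n.+2
    = 4 * antidiag_sum diag_coef n.+1 + 1 * antidiag_sum diag_coef n.
  apply: antidiag_sumSS => [k r|k|r].
  - by rewrite mul1n diag_coefSS.
  - by rewrite !diag_coef_k0.
  - by rewrite !diag_coef_0r expnS.
apply: (@rec2_uniq 4 1 (fun m => 2 * antidiag_sum diag_coef m)
                         (fun m => fib (3 * m.+1))) => [||n|n].
- by rewrite /antidiag_sum big_ord1 diag_coef_k0.
- by rewrite /antidiag_sum big_ord_recr big_ord1 /= diag_coef_0r diag_coef_k0.
- by rewrite S_SS; lia.
- by rewrite fib_mul3SS mul1n.
Qed.

Lemma binz_natB (m d l : nat) : (d <= m)%N -> binz (m%:Z - d%:Z) l = 'C(m - d, l).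
Proof. by move=> dm; rewrite subzn. Qed.

Theorem proposition7p8 (n : nat) (hn : (1 <= n)%N) :
  (\sum_(k < n) \sum_(l < n) \sum_(d < n)
     (binz (n%:Z - 1 - d%:Z) l * binz (n%:Z - 1 - k%:Z) d
        * binz (n%:Z - 1 - l%:Z) k)%N)%:R
  = (fib (3 * n))%:R / 2 :> rat.
Proof.
case: n hn => [//|m] _.
rewrite -antidiag_diag_coef_fib natrM mulrAC divff ?mul1r //; congr (_%:R).
rewrite (_ : m.+1%:Z - 1 = m%:Z); last lia.
apply: eq_bigr => k _.
have km : (k <= m)%N := ltnSE (ltn_ord k).
rewrite -triple_sum_diag_coef //.
apply: eq_bigr => l _; apply: eq_bigr => d _.
by rewrite !binz_natB // -ltnS.
Qed.
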